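(* Let $D$ be an infinite commutative unital integral domain. The images of the monomials in $B$ form a basis of the $D$-module $D\langle X\rangle/I$ (in particular $D\langle X\rangle/I$ is a free $D$-module).
   Context: Let $Y=\{y_1,y_2,\dots\}$ and $Z=\{z_1,z_2,\dots\}$ be disjoint countable sets of variables, $X=Y\cup Z$, and $D\langle X\rangle$ the free unital associative $D$-algebra on $X$, $\mathbb{Z}_2$-graded with the $y_i$ even and the $z_i$ odd. Let $L\langle X\rangle$ be the Lie subalgebra of $D\langle X\rangle$ (bracket $[a,b]=ab-ba$) generated by $X$, with induced grading $L\langle X\rangle^{(0)}\oplus L\langle X\rangle^{(1)}$. An ideal of weak graded identities is a two-sided ideal $J$ of $D\langle X\rangle$ closed under every algebra endomorphism of $D\langle X\rangle$ mapping each $y_i$ into $L\langle X\rangle^{(0)}$ and each $z_i$ into $L\langle X\rangle^{(1)}$; the ideal of weak graded identities generated by a set of polynomials is the smallest such ideal containing it. Let $I$ be the ideal of weak graded identities generated by $y_1y_2-y_2y_1$, $z_1z_2z_3-z_3z_2z_1$ and $y_1z_1+z_1y_1$. Let $B$ be the set of monomials of the forms $y_{a_1}\cdots y_{a_k}$ ($k\ge0$, $a_1\le\dots\le a_k$; $k=0$ gives $1$) and $y_{a_1}\cdots y_{a_k}z_{c_1}z_{d_1}z_{c_2}z_{d_2}\cdots z_{c_m}z_{d_m}$ or $y_{a_1}\cdots y_{a_k}z_{c_1}z_{d_1}\cdots z_{d_{m-1}}z_{c_m}$ (the last odd variable $z_{d_m}$ may be omitted), where $k\ge0$, $m\ge1$,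 $a_1\le\dots\le a_k$, $c_1\le\dots\le c_m$, and the $d_j$ present are nondecreasing. *)

From HB Require Import structures.
From mathcomp Require Import all_boot all_order all_algebra.
Import GRing.Theory.
Local Open Scope ring_scope.

(* Variables: (false, i) is the even variable y_i, (true, i) is the odd
   variable z_i (i : nat; relabelling of the countable index set). *)
Definition var := (bool * nat)%type.
Definition yv (i : nat) : var := (false, i).
Definition zv (i : nat) : var := (true, i).
Definition word := seq var.

(* Elements of the free algebra D<X> are presented as formal finite sums
   sum_t t.1 * t.2 ; the element they denote is the coefficient function. *)
Definition fpoly (D : Type) := seq (D * word).

Section FreeAlg.
Variable D : comNzRingType.

Definition coef (p : fpoly D) (w : word) : D := \sum_(t <- p | t.2 == w) t.1.

Definition padd (p q : fpoly D) : fpoly D := p ++ q.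
Definition pscale (c : D) (p : fpoly D) : fpoly D := [seq (c * t.1, t.2) | t <- p].
Definition psub (p q : fpoly D) : fpoly D := p ++ pscale (-1) q.
Definition pmul (p q : fpoly D) : fpoly D :=
  [seq (a.1 * b.1, a.2 ++ b.2) | a <- p, b <- q].
Definition pone : fpoly D := [:: (1, [::])].
Definition pvar (x : var) : fpoly D := [:: (1, [:: x])].
Definition pbr (p q : fpoly D) : fpoly D := psub (pmul p q) (pmul q p).

Definition psubst (phi : var -> fpoly D) (p : fpoly D) : fpoly D :=
  flatten [seq pscale t.1 (foldr (fun x acc => pmul (phi x) acc) pone t.2) | t <- p].

Definition zdeg (w : word) : nat := count (fun x : var => x.1) w.
Definition homog_par (b : bool) (f : word -> D) : Prop :=
  forall w, f w != 0 -> odd (zdeg w) = b.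

Definition inLie (f : word -> D) : Prop :=
  forall P : (word -> D) -> Prop,
    (forall x, P (coef (pvar x))) ->
    (forall p q, P (coef p) -> P (coef q) -> P (coef (padd p q))) ->
    (forall c p, P (coef p) -> P (coef (pscale c p))) ->
    (forall p q, P (coef p) -> P (coef q) -> P (coef (pbr p q))) ->
    P f.

Definition admissible (phi : var -> fpoly D) : Prop :=
  forall x : var, inLie (coef (phi x)) /\ homog_par x.1 (coef (phi x)).

Definition weak_ideal (J : (word -> D) -> Prop) : Prop :=
  [/\ J (coef [::]),
      (forall p q, J (coef p) -> J (coef q) -> J (coef (padd p q))),
      (forall a p b, J (coef p) -> J (coef (pmul (pmul a p) b))) &
      (forall phi p, admissible phi -> J (coef p) -> J (coef (psubst phi p)))].

Definition gen1 : fpoly D :=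
  psub (pmul (pvar (yv 1)) (pvar (yv 2))) (pmul (pvar (yv 2)) (pvar (yv 1))).
Definition gen2 : fpoly D :=
  psub (pmul (pmul (pvar (zv 1)) (pvar (zv 2))) (pvar (zv 3)))
       (pmul (pmul (pvar (zv 3)) (pvar (zv 2))) (pvar (zv 1))).
Definition gen3 : fpoly D :=
  padd (pmul (pvar (yv 1)) (pvar (zv 1))) (pmul (pvar (zv 1)) (pvar (yv 1))).

Definition idealI (f : word -> D) : Prop :=
  forall J, weak_ideal J -> J (coef gen1) -> J (coef gen2) -> J (coef gen3) -> J f.

End FreeAlg.
Arguments coef {D}. Arguments padd {D}. Arguments pscale {D}. Arguments psub {D}.
Arguments pmul {D}. Arguments pbr {D}. Arguments psubst {D}. Arguments homog_par {D}.
Arguments inLie {D}. Arguments admissible {D}. Arguments weak_ideal {D}. Arguments idealI {D}.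

Definition evpos (s : seq nat) : seq nat := mask (mkseq (fun i => ~~ odd i) (size s)) s.
Definition odpos (s : seq nat) : seq nat := mask (mkseq (fun i => odd i) (size s)) s.

Definition inB (w : word) : Prop :=
  exists (ys zs : seq nat),
    [/\ w = map yv ys ++ map zv zs, sorted leq ys,
        sorted leq (evpos zs) & sorted leq (odpos zs)].

(* Spanning: modulo I the y's commute, a z moves past a y at the cost of a sign,
   and z_i z_j z_k = z_k z_j z_i permutes independently the letters in even and
   in odd position of a word in the z's; so every monomial is congruent to a
   multiple of an element of B.
   Independence: the generators of I vanish when y_i is evaluated at traceless
   diagonal and z_i at anti-diagonal 2x2 matrices, and the polynomials vanishing
   under all such evaluations form an ideal of weak graded identities (even Lie
   elements evaluate to traceless diagonal matrices). For the generic evaluation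
   over a polynomial ring, the first row of the image of an element of B has a
   single nonzero entry, a monomial recording its y's and its even- and
   odd-position z's; these data determine the element of B. *)

From mathcomp Require Import all_boot all_order all_algebra.
From mathcomp Require Import zify ring mpoly.
From Stdlib Require Import FunctionalExtensionality.
Set Implicit Arguments. Unset Strict Implicit. Unset Printing Implicit Defensive.
Import GRing.Theory.

Lemma perm_eq_rel_closure (T : eqType) (P : seq T -> seq T -> Prop) :
  (forall s, P s s) -> (forall s t u, P s t -> P t u -> P s u) ->
  (forall x s t, P s t -> P (x :: s) (x :: t)) ->
  (forall x y s, P [:: x, y & s] [:: y, x & s]) ->
  forall s t, perm_eq s t -> P s t.
Proof.
move=> Prefl Ptrans Pcons Pswap; elim=> [|x s IH] t.
  by move=> /perm_size /esym /size0nil ->.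
move=> pxs_t; have xt : x \in t by rewrite -(perm_mem pxs_t) mem_head.
case/splitPr: xt pxs_t => t1 t2 pxs_t.
have ps : perm_eq s (t1 ++ t2).
  by rewrite -(perm_cons x); apply: perm_trans pxs_t _; rewrite -cat1s perm_catCA.
apply: (Ptrans _ _ _ (Pcons x _ _ (IH _ ps))).
elim: t1 {pxs_t ps} => [|y t1 IHt] /=; first exact: Prefl.
exact: Ptrans (Pswap x y _) (Pcons y _ _ IHt).
Qed.

Fixpoint interleave (e o : seq nat) : seq nat :=
  if e is x :: e' then x :: (if o is y :: o' then y :: interleave e' o' else e') else o.

Lemma interleave_cons x e o : interleave (x :: e) o = x :: interleave o e.
Proof. by elim: e x o => [|x' e IH] x [|y o] //=; rewrite -IH. Qed.

Lemma evposC x s : evpos (x :: s) = x :: odpos s.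
Proof.
rewrite /evpos /odpos /mkseq /= (iotaDl 1 0) -map_comp.
by congr (_ :: mask _ _); apply: eq_map => i /=; rewrite negbK.
Qed.

Lemma odposC x s : odpos (x :: s) = evpos s.
Proof.
rewrite /evpos /odpos /mkseq /= (iotaDl 1 0) -map_comp.
by congr (mask _ _); apply: eq_map => i.
Qed.

Arguments evpos : simpl never.
Arguments odpos : simpl never.

Lemma interleave_evpos_odpos s : interleave (evpos s) (odpos s) = s.
Proof. by elim: s => [|x s IH] //; rewrite evposC odposC interleave_cons IH. Qed.

Lemma size_evpos_odpos s : size (odpos s) <= size (evpos s) <= (size (odpos s)).+1.
Proof. by elim: s => [|x s IH] //; rewrite evposC odposC /=; lia. Qed.

Lemma evpos_odpos_interleave e o : size o <= size e <= (size o).+1 ->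
  evpos (interleave e o) = e /\ odpos (interleave e o) = o.
Proof.
elim: e o => [|x e IH] [|y o] //= sz.
  by have /size0nil -> : size e = 0%N by lia.
by rewrite !(evposC, odposC); have [-> ->] := IH o sz.
Qed.

Local Open Scope ring_scope.

Section IdealI.
Variable D : comNzRingType.
Implicit Types (p q : fpoly D) (u v w : word) (c : D).

Lemma fpoly_coef_nil w : coef ([::] : fpoly D) w = 0.
Proof. by rewrite /coef big_nil. Qed.

Lemma fpoly_coef_cons t p w : coef (t :: p) w = (if t.2 == w then t.1 else 0) + coef p w.
Proof. by rewrite /coef big_cons; case: ifP; rewrite ?add0r. Qed.

Lemma fpoly_coef_cat p q w : coef (p ++ q) w = coef p w + coef q w.
Proof. by rewrite /coef big_cat. Qed.

Lemma fpoly_coef_notin p w : w \notin map snd p -> coef p w = 0.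
Proof.
elim: p => [|t p IH]; first by rewrite fpoly_coef_nil.
by rewrite /= inE negb_or fpoly_coef_cons eq_sym => /andP[/negbTE -> /IH ->]; rewrite addr0.
Qed.

Lemma fpoly_coef_uniq p t : uniq (map snd p) -> t \in p -> coef p t.2 = t.1.
Proof.
elim: p => [|s p IH] //= /andP[sp up]; rewrite inE fpoly_coef_cons => /orP[/eqP->|tp].
  by rewrite eqxx (fpoly_coef_notin sp) addr0.
rewrite IH //; case: eqP => [st|]; last by rewrite add0r.
by move: sp; rewrite st map_f.
Qed.

Lemma idealI_eq p q : coef p =1 coef q -> idealI (coef p) -> idealI (coef q).
Proof. by move=> /functional_extensionality ->. Qed.

Lemma idealI_nil : idealI (coef ([::] : fpoly D)).
Proof. by move=> J []. Qed.

Lemma idealI_cat p q : idealI (coef p) -> idealI (coef q) -> idealI (coef (p ++ q)).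
Proof.
move=> Ip Iq J IJ g1 g2 g3; have [_ Jcat _ _] := IJ.
exact: Jcat (Ip J IJ g1 g2 g3) (Iq J IJ g1 g2 g3).
Qed.

Lemma idealI_mul a p b : idealI (coef p) -> idealI (coef (pmul (pmul a p) b)).
Proof.
move=> Ip J IJ g1 g2 g3; have [_ _ Jmul _] := IJ.
exact: Jmul (Ip J IJ g1 g2 g3).
Qed.

Lemma idealI_subst phi p :
  admissible phi -> idealI (coef p) -> idealI (coef (psubst phi p)).
Proof.
move=> Aphi Ip J IJ g1 g2 g3; have [_ _ _ Jsubst] := IJ.
exact: Jsubst Aphi (Ip J IJ g1 g2 g3).
Qed.

Definition eqmodI u c v := idealI (coef [:: (1, u); (- c, v)]).

Lemma eqmodI_refl u : eqmodI u 1 u.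
Proof.
apply: idealI_eq idealI_nil => w; rewrite !fpoly_coef_cons fpoly_coef_nil /=.
by case: (u == w); rewrite ?addr0 ?subrr.
Qed.

Lemma eqmodI_trans u c v c' w : eqmodI u c v -> eqmodI v c' w -> eqmodI u (c * c') w.
Proof.
move=> Euv Evw; have := idealI_cat Euv (idealI_mul [:: (c, [::])] [:: (1, [::])] Evw).
apply: idealI_eq => w0; rewrite /= !fpoly_coef_cons fpoly_coef_nil /= !cats0.
by case: (u == w0); case: (v == w0); case: (w == w0); ring.
Qed.

Lemma eqmodI_trans1 u v w : eqmodI u 1 v -> eqmodI v 1 w -> eqmodI u 1 w.
Proof. by move=> Euv /(eqmodI_trans Euv); rewrite mulr1. Qed.

Lemma eqmodI_cat2 a b u c v : eqmodI u c v -> eqmodI (a ++ u ++ b) c (a ++ v ++ b).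
Proof.
move=> /(idealI_mul [:: (1, a)] [:: (1, b)]).
by rewrite /pmul /= !catA !mulr1 !mul1r.
Qed.

Lemma eqmodI_catl a u c v : eqmodI u c v -> eqmodI (a ++ u) c (a ++ v).
Proof. by move=> /(eqmodI_cat2 a [::]); rewrite !cats0. Qed.

Lemma eqmodI_catr b u c v : eqmodI u c v -> eqmodI (u ++ b) c (v ++ b).
Proof. exact: eqmodI_cat2 [::] b u c v. Qed.

Definition relabel (ys zs : seq nat) (x : var) : var :=
  if x.1 then zv (nth 0 zs x.2) else yv (nth 0 ys x.2).

Lemma psubst_relabel ys zs p :
  psubst (fun x => pvar D (relabel ys zs x)) p = [seq (t.1, map (relabel ys zs) t.2) | t <- p].
Proof.
have monomial w : foldr (fun x acc => pmul (pvar D (relabel ys zs x)) acc) (pone D) w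
                  = [:: (1, map (relabel ys zs) w)].
  by elim: w => //= x w ->; rewrite /pmul /= mulr1.
rewrite /psubst; elim: p => //= t p IH; by rewrite monomial /pscale /= mulr1 IH.
Qed.

Lemma admissible_relabel ys zs : admissible (fun x => pvar D (relabel ys zs x)).
Proof.
move=> x; split; first by move=> P Pvar.
move=> w; rewrite fpoly_coef_cons fpoly_coef_nil addr0.
case: ([:: _] =P w) => [<- _|]; last by rewrite eqxx.
by rewrite /zdeg /relabel; case: x.1.
Qed.

Lemma eqmodI_relabel ys zs u c v :
  eqmodI u c v -> eqmodI (map (relabel ys zs) u) c (map (relabel ys zs) v).
Proof. by move=> /(idealI_subst (admissible_relabel ys zs)); rewrite psubst_relabel. Qed.

Lemma eqmodI_yy i j : eqmodI [:: yv i; yv j] 1 [:: yv j; yv i].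
Proof.
have gen1E : eqmodI [:: yv 1; yv 2] 1 [:: yv 2; yv 1].
  have : idealI (coef (gen1 D)) by move=> J _ g1.
  by rewrite /gen1 /psub /pscale /pmul /= !mulr1.
exact: (eqmodI_relabel [:: 0; i; j] [::] gen1E).
Qed.

Lemma eqmodI_zzz i j k : eqmodI [:: zv i; zv j; zv k] 1 [:: zv k; zv j; zv i].
Proof.
have gen2E : eqmodI [:: zv 1; zv 2; zv 3] 1 [:: zv 3; zv 2; zv 1].
  have : idealI (coef (gen2 D)) by move=> J _ _ g2.
  by rewrite /gen2 /psub /pscale /pmul /= !mulr1.
exact: (eqmodI_relabel [::] [:: 0; i; j; k] gen2E).
Qed.

Lemma eqmodI_zy i j : eqmodI [:: zv j; yv i] (-1) [:: yv i; zv j].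
Proof.
have gen3E : eqmodI [:: zv 1; yv 1] (-1) [:: yv 1; zv 1].
  have : idealI (coef (gen3 D)) by move=> J _ _ _ g3.
  rewrite /gen3 /padd /pmul /= !mulr1; apply: idealI_eq => w.
  by rewrite !fpoly_coef_cons fpoly_coef_nil opprK !addr0 addrC.
exact: (eqmodI_relabel [:: 0; i] [:: 0; j] gen3E).
Qed.

End IdealI.

Section Spanning.
Variable D : comNzRingType.
Local Notation eqmodI := (@eqmodI D).

Lemma eqmodI_perm_y ys ys' : perm_eq ys ys' -> eqmodI (map yv ys) 1 (map yv ys').
Proof.
apply: (perm_eq_rel_closure (P := fun s t => eqmodI (map yv s) 1 (map yv t))).
- by move=> s; apply: eqmodI_refl.
- by move=> s t u; apply: eqmodI_trans1.
- by move=> x s t; apply: (eqmodI_catl [:: yv x]).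
- by move=> x y s; exact: (eqmodI_catr (map yv s) (eqmodI_yy x y)).
Qed.

(* Consecutive letters of [e] lie two apart in the interleaved word, where the
   relation z_i z_j z_k = z_k z_j z_i swaps them. *)
Lemma eqmodI_perm_evpos e e' : perm_eq e e' -> forall o, (size e <= (size o).+1)%N ->
  eqmodI (map zv (interleave e o)) 1 (map zv (interleave e' o)).
Proof.
pose P s t := size s = size t /\ forall o, (size s <= (size o).+1)%N ->
  eqmodI (map zv (interleave s o)) 1 (map zv (interleave t o)).
move=> pe; suff [_ //] : P e e'.
apply: perm_eq_rel_closure pe.
- by move=> s; split=> // o _; apply: eqmodI_refl.
- move=> s t u [st Est] [tu Etu]; split; first by rewrite st.
  by move=> o le; apply: eqmodI_trans1 (Est o le) (Etu o _); rewrite -st.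
- move=> x s t [st Est]; split; first by rewrite /= st.
  case=> [|y o] /= le; last exact: (eqmodI_catl [:: zv x; zv y] (Est o le)).
  move: le st; rewrite ltnS leqn0 => /nilP -> /esym/size0nil ->.
  exact: eqmodI_refl.
- move=> x y s; split=> // -[|a o] //= _.
  exact: (eqmodI_catr _ (eqmodI_zzz x a y)).
Qed.

Lemma eqmodI_perm_odpos e o o' : perm_eq o o' -> (size o <= size e)%N ->
  eqmodI (map zv (interleave e o)) 1 (map zv (interleave e o')).
Proof.
case: e => [|x e] po le.
  move: le (perm_size po); rewrite leqn0 => /nilP -> /esym/size0nil ->.
  exact: eqmodI_refl.
rewrite !interleave_cons; exact: (eqmodI_catl [:: zv x] (eqmodI_perm_evpos po le)).
Qed.

Lemma eqmodI_sort_z zs : eqmodI (map zv zs) 1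
  (map zv (interleave (sort leq (evpos zs)) (sort leq (odpos zs)))).
Proof.
have /andP[oe eo] := size_evpos_odpos zs.
have pe : perm_eq (evpos zs) (sort leq (evpos zs)) by rewrite perm_sym perm_sort.
have po : perm_eq (odpos zs) (sort leq (odpos zs)) by rewrite perm_sym perm_sort.
rewrite -[in map zv zs](interleave_evpos_odpos zs).
apply: eqmodI_trans1 (eqmodI_perm_evpos pe eo) (eqmodI_perm_odpos po _).
by rewrite size_sort.
Qed.

Lemma eqmodI_zmove ys j s :
  eqmodI (zv j :: map yv ys ++ s) ((-1) ^+ size ys) (map yv ys ++ zv j :: s).
Proof.
elim: ys => [|i ys IH] /=; first exact: eqmodI_refl.
rewrite exprS; apply: eqmodI_trans (eqmodI_catl [:: yv i] IH).
exact: (eqmodI_catr _ (eqmodI_zy i j)).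
Qed.

Lemma eqmodI_split w : exists c ys zs, eqmodI w c (map yv ys ++ map zv zs).
Proof.
elim: w => [|[[] j] w [c [ys [zs E]]]]; first by exists 1, [::], [::]; apply: eqmodI_refl.
  exists (c * (-1) ^+ size ys), ys, (j :: zs).
  exact: eqmodI_trans (eqmodI_catl [:: zv j] E) (eqmodI_zmove ys j (map zv zs)).
by exists c, (j :: ys), zs; apply: (eqmodI_catl [:: yv j] E).
Qed.

Lemma inB_interleave ys e o : sorted leq ys -> sorted leq e -> sorted leq o ->
  (size o <= size e <= (size o).+1)%N -> inB (map yv ys ++ map zv (interleave e o)).
Proof.
move=> sy se so /evpos_odpos_interleave[ee oo].
by exists ys, (interleave e o); rewrite ee oo.
Qed.

Lemma eqmodI_inB w : exists c w', inB w' /\ eqmodI w c w'.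
Proof.
have [c [ys [zs E]]] := eqmodI_split w.
set e := sort leq (evpos zs); set o := sort leq (odpos zs).
exists (c * 1 * 1), (map yv (sort leq ys) ++ map zv (interleave e o)); split.
  by apply: inB_interleave; rewrite ?sort_sorted ?size_sort ?size_evpos_odpos //;
     apply: leq_total.
apply: eqmodI_trans (eqmodI_catl _ (eqmodI_sort_z zs)).
by apply: eqmodI_trans E (eqmodI_catr _ (eqmodI_perm_y _)); rewrite perm_sym perm_sort.
Qed.

Theorem spanning (f : fpoly D) :
  exists p : fpoly D, (forall t, t \in p -> inB t.2) /\ idealI (coef (psub f p)).
Proof.
elim: f => [|t f [p [Bp Ip]]]; first by exists [::]; split => //; apply: idealI_nil.
have [c [w [Bw E]]] := eqmodI_inB t.2.
exists ((t.1 * c, w) :: p); split.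
  by move=> u; rewrite inE => /orP[/eqP -> //|]; apply: Bp.
have := idealI_cat (idealI_mul [:: (t.1, [::])] [:: (1, [::])] E) Ip.
apply: idealI_eq => w0; rewrite /psub /pscale /= !fpoly_coef_cons !fpoly_coef_cat /=.
rewrite !fpoly_coef_cons !cats0 /=.
by case: (t.2 == w0); case: (w == w0); ring.
Qed.

End Spanning.

Section Evaluation.
Variables (D R : comNzRingType) (f : {rmorphism D -> R}) (A : algType R).
Implicit Types (e : var -> A) (p q : fpoly D) (u v w : word).

Definition evalW e w : A := \prod_(x <- w) e x.
Definition evalP e p : A := \sum_(t <- p) f t.1 *: evalW e t.2.

Lemma evalW_cat e u v : evalW e (u ++ v) = evalW e u * evalW e v.
Proof. by rewrite /evalW big_cat. Qed.

Lemma evalP_cat e p q : evalP e (p ++ q) = evalP e p + evalP e q.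
Proof. by rewrite /evalP big_cat. Qed.

Lemma evalP_scale e c p : evalP e (pscale c p) = f c *: evalP e p.
Proof.
rewrite /evalP big_map scaler_sumr; apply: eq_bigr => t _.
by rewrite rmorphM scalerA.
Qed.

Lemma evalP_mul e p q : evalP e (pmul p q) = evalP e p * evalP e q.
Proof.
rewrite /evalP big_allpairs_dep mulr_suml; apply: eq_bigr => a _.
rewrite mulr_sumr; apply: eq_bigr => b _ /=.
by rewrite evalW_cat rmorphM -scalerAl -scalerAr scalerA.
Qed.

Lemma evalP_pvar e x : evalP e (pvar D x) = e x.
Proof. by rewrite /evalP /evalW !big_seq1 rmorph1 scale1r. Qed.

Lemma evalP_subst e (phi : var -> fpoly D) p :
  evalP e (psubst phi p) = evalP (fun x => evalP e (phi x)) p.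
Proof.
have monomial w : evalP e (foldr (fun x acc => pmul (phi x) acc) (pone D) w) =
                  \prod_(x <- w) evalP e (phi x).
  elim: w => [|x w IH] /=; last by rewrite evalP_mul IH big_cons.
  by rewrite /evalP /pone big_seq1 /evalW !big_nil rmorph1 scale1r.
rewrite /psubst /evalP big_flatten big_map; apply: eq_bigr => t _.
by rewrite -/(evalP e _) evalP_scale monomial.
Qed.

Lemma evalP_coef e p (S : seq word) : uniq S -> {subset map snd p <= S} ->
  evalP e p = \sum_(w <- S) f (coef p w) *: evalW e w.
Proof.
move=> uS pS; under [RHS]eq_bigr => w _ do
  rewrite /coef rmorph_sum scaler_suml big_mkcond.
rewrite exchange_big /evalP; apply: eq_big_seq => t tp.
rewrite (big_rem t.2) ?pS ?map_f //= eqxx big1_seq ?addr0 // => w /andP[_ wt].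
by case: eqP => // Ew; move: wt; rewrite -Ew mem_rem_uniqF.
Qed.

Lemma evalP_eq e p q : coef p = coef q -> evalP e p = evalP e q.
Proof.
move=> pq; pose S := undup (map snd p ++ map snd q).
have Sp : {subset map snd p <= S} by move=> w wp; rewrite mem_undup mem_cat wp.
have Sq : {subset map snd q <= S} by move=> w wq; rewrite mem_undup mem_cat wq orbT.
by rewrite (evalP_coef _ (undup_uniq _) Sp) (evalP_coef _ (undup_uniq _) Sq) pq.
Qed.

End Evaluation.

Section GradedModel.
Variables (D R : comNzRingType) (f : {rmorphism D -> R}).
Local Notation M := 'M[R]_2.
Local Notation i0 := (ord0 : 'I_2).
Local Notation i1 := (ord_max : 'I_2).
Local Notation evalP := (evalP f).
Implicit Types (A B C : M) (e : var -> M) (p q : fpoly D).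

Lemma ord2P (i : 'I_2) : i = i0 \/ i = i1.
Proof. by case: i => -[|[|k]] ik; [left | right | ]; try apply: val_inj. Qed.

Lemma mulmx2E A B i j : (A * B) i j = A i i0 * B i0 j + A i i1 * B i1 j.
Proof.
rewrite -mulmxE mxE !big_ord_recl big_ord0 addr0.
by have -> : lift ord0 ord0 = i1 :> 'I_2 by apply: val_inj.
Qed.

Lemma mxtrace2 A : \tr A = A i0 i0 + A i1 i1.
Proof.
rewrite /mxtrace !big_ord_recl big_ord0 addr0.
by have -> : lift ord0 ord0 = i1 :> 'I_2 by apply: val_inj.
Qed.

Definition homog2 (b : bool) A :=
  if b then A i0 i0 = 0 /\ A i1 i1 = 0 else A i0 i1 = 0 /\ A i1 i0 = 0.

Lemma homog20 b : homog2 b 0.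
Proof. by case: b; rewrite /homog2 !mxE. Qed.

Lemma homog21 : homog2 false 1.
Proof. by rewrite /homog2 !mxE. Qed.

Lemma homog2D b A B : homog2 b A -> homog2 b B -> homog2 b (A + B).
Proof. by case: b => -[a1 a2] [b1 b2]; rewrite /homog2 !mxE a1 a2 b1 b2 addr0. Qed.

Lemma homog2Z b c A : homog2 b A -> homog2 b (c *: A).
Proof. by case: b => -[a1 a2]; rewrite /homog2 !mxE a1 a2 mulr0. Qed.

Lemma homog2M b c A B : homog2 b A -> homog2 c B -> homog2 (b (+) c) (A * B).
Proof.
by case: b c => -[] [a1 a2] [b1 b2]; rewrite /homog2 !mulmx2E a1 a2 b1 b2 ?mulr0 ?mul0r ?addr0.
Qed.

Lemma even2_commute A B : homog2 false A -> homog2 false B -> A * B = B * A.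
Proof.
move=> [a1 a2] [b1 b2]; apply/matrixP => i j; rewrite !mulmx2E.
by case: (ord2P i) (ord2P j) => [->|->] [->|->]; rewrite ?a1 ?a2 ?b1 ?b2; ring.
Qed.

Lemma odd2_mul3C A B C :
  homog2 true A -> homog2 true B -> homog2 true C -> A * B * C = C * B * A.
Proof.
move=> [a1 a2] [b1 b2] [c1 c2]; apply/matrixP => i j; rewrite !mulmx2E.
by case: (ord2P i) (ord2P j) => [->|->] [->|->]; rewrite ?a1 ?a2 ?b1 ?b2 ?c1 ?c2; ring.
Qed.

Lemma traceless_even2_anticommute A B :
  homog2 false A -> \tr A = 0 -> homog2 true B -> A * B = - (B * A).
Proof.
move=> [a1 a2] trA [b1 b2]; have a11 : A i1 i1 = - A i0 i0.
  by apply/eqP; rewrite -addr_eq0 addrC -mxtrace2 trA.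
apply/matrixP => i j; rewrite [in RHS]mxE !mulmx2E.
by case: (ord2P i) (ord2P j) => [->|->] [->|->]; rewrite ?a1 ?a2 ?b1 ?b2 ?a11; ring.
Qed.

Definition graded_assignment e :=
  forall i, [/\ homog2 false (e (yv i)), \tr (e (yv i)) = 0 & homog2 true (e (zv i))].

Lemma evalW_homog e w : graded_assignment e -> homog2 (odd (zdeg w)) (evalW e w).
Proof.
move=> ge; elim: w => [|[b i] w IH]; first by rewrite /evalW big_nil; apply: homog21.
rewrite /evalW big_cons -/(evalW e w) /zdeg /= oddD oddb -/(zdeg w).
by apply: homog2M IH; have [? _ ?] := ge i; case: b.
Qed.

Lemma evalP_homog e b q :
  graded_assignment e -> homog_par b (coef q) -> homog2 b (evalP e q).
Proof.
move=> ge qb; have Sq : {subset map snd q <= undup (map snd q)}.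
  by move=> w; rewrite mem_undup.
rewrite (evalP_coef _ _ (undup_uniq _) Sq).
apply: (big_ind (homog2 b)); [exact: homog20 | exact: homog2D | move=> w _].
have [->|/qb <-] := eqVneq (coef q w) 0; first by rewrite rmorph0 scale0r; apply: homog20.
by apply: homog2Z; apply: evalW_homog.
Qed.

Lemma evalP_Lie_traceless e q :
  graded_assignment e -> inLie (coef q) -> \tr (evalP e q) = 0.
Proof.
move=> ge Lq; pose P g := forall r, coef r = g -> \tr (evalP e r) = 0.
suff : P (coef q) by apply.
apply: Lq.
- move=> x r /evalP_eq ->; rewrite evalP_pvar; case: x => -[] i.
    by have [_ _ [z1 z2]] := ge i; rewrite mxtrace2 z1 z2 addr0.
  by have [_ tr0 _] := ge i.
- move=> p1 q1 Hp Hq r /evalP_eq ->.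
  by rewrite evalP_cat mxtraceD (Hp p1) ?(Hq q1) ?addr0.
- move=> c p1 Hp r /evalP_eq ->.
  by rewrite evalP_scale mxtraceZ (Hp p1) ?mulr0.
- move=> p1 q1 _ _ r /evalP_eq ->.
  rewrite /pbr /psub evalP_cat evalP_scale !evalP_mul rmorphN1 scaleN1r.
  by rewrite raddfB /= -!mulmxE mxtrace_mulC subrr.
Qed.

Lemma graded_assignment_subst e (phi : var -> fpoly D) :
  graded_assignment e -> admissible phi -> graded_assignment (fun x => evalP e (phi x)).
Proof.
move=> ge Aphi i; have [Ly Hy] := Aphi (yv i); have [_ Hz] := Aphi (zv i).
by split; [apply: evalP_homog Hy | apply: evalP_Lie_traceless Ly | apply: evalP_homog Hz].
Qed.

Definition graded_identity (g : word -> D) :=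
  forall q, coef q = g -> forall e, graded_assignment e -> evalP e q = 0.

Lemma graded_identityP p :
  (forall e, graded_assignment e -> evalP e p = 0) -> graded_identity (coef p).
Proof. by move=> Hp q Eq e /Hp; rewrite (evalP_eq _ _ Eq). Qed.

Lemma graded_identity_weak_ideal : weak_ideal graded_identity.
Proof.
split.
- by apply: graded_identityP => e _; rewrite /evalP big_nil.
- move=> p q Hp Hq; apply: graded_identityP => e ge.
  by rewrite evalP_cat (Hp p) ?(Hq q) ?addr0.
- move=> a p b Hp; apply: graded_identityP => e ge.
  by rewrite !evalP_mul (Hp p) ?mulr0 ?mul0r.
- move=> phi p Aphi Hp; apply: graded_identityP => e ge.
  by rewrite evalP_subst (Hp p) //; apply: graded_assignment_subst.
Qed.

Lemma idealI_graded_identity p :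
  idealI (coef p) -> forall e, graded_assignment e -> evalP e p = 0.
Proof.
move=> Ip; apply: (Ip graded_identity graded_identity_weak_ideal _ _ _ p erefl).
- apply: graded_identityP => e ge; have [y1 _ _] := ge 1%N; have [y2 _ _] := ge 2%N.
  rewrite /gen1 /psub evalP_cat evalP_scale !evalP_mul !evalP_pvar rmorphN1 scaleN1r.
  by rewrite even2_commute ?subrr.
- apply: graded_identityP => e ge.
  have [_ _ z1] := ge 1%N; have [_ _ z2] := ge 2%N; have [_ _ z3] := ge 3%N.
  rewrite /gen2 /psub evalP_cat evalP_scale !evalP_mul !evalP_pvar rmorphN1 scaleN1r.
  by rewrite odd2_mul3C ?subrr.
- apply: graded_identityP => e ge; have [y1 tr1 z1] := ge 1%N.
  rewrite /gen3 /padd evalP_cat !evalP_mul !evalP_pvar.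
  by rewrite traceless_even2_anticommute ?addNr.
Qed.

End GradedModel.

Section GenericAssignment.
Variables (D : comNzRingType) (N : nat).
Local Notation n := (3 * N).+1.
Local Notation i0 := (ord0 : 'I_2).
Local Notation i1 := (ord_max : 'I_2).

Definition indet (r c : nat) : 'I_n := inord (3 * c + r).

(* y_c is sent to diag(t, -t) and z_c to [[0, a], [b, 0]], where t, a, b are
   the indeterminates numbered 3c, 3c+1, 3c+2. *)
Definition generic_assignment (x : var) : 'M[{mpoly D[n]}]_2 :=
  if x.1 then \matrix_(i, j)
    (if i == j then 0 else if i == i0 then 'X_(indet 1%N x.2) else 'X_(indet 2%N x.2))
  else \matrix_(i, j)
    (if i == j then (if i == i0 then 'X_(indet 0%N x.2) else - 'X_(indet 0%N x.2)) else 0).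
Local Notation ge := generic_assignment.

Lemma graded_generic_assignment : graded_assignment ge.
Proof. by move=> i; rewrite /homog2 mxtrace2 /ge !mxE /= subrr. Qed.

Fixpoint path_indets (b : bool) (w : word) : seq 'I_n :=
  if w is x :: w' then
    if x.1 then indet (if b then 2 else 1)%N x.2 :: path_indets (~~ b) w'
    else indet 0%N x.2 :: path_indets b w'
  else [::].

Definition row2 (b : bool) : 'I_2 := if b then i1 else i0.

Lemma evalW_generic_zrow b zs j : evalW ge (map zv zs) (row2 b) j =
  if j == row2 (b (+) odd (size zs)) then \prod_(k <- path_indets b (map zv zs)) 'X_k else 0.
Proof.
elim: zs b j => [|c zs IH] b j.
  by rewrite /evalW !big_nil mxE addbF eq_sym; case: (_ == _).
rewrite /evalW big_cons -/(evalW _ _) mulmx2E (IH false j) (IH true j) /= big_cons.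
by case: b; rewrite /ge !mxE /= ?mul0r ?add0r ?addr0 ?negbK; case: (j == _); rewrite ?mulr0.
Qed.

Lemma evalW_generic_row0 ys zs j : evalW ge (map yv ys ++ map zv zs) i0 j =
  if j == row2 (odd (size zs)) then
    \prod_(k <- path_indets false (map yv ys ++ map zv zs)) 'X_k else 0.
Proof.
elim: ys j => [|c ys IH] j; first exact: (evalW_generic_zrow false zs j).
rewrite /evalW big_cons -/(evalW _ _) mulmx2E IH /= big_cons /ge !mxE /=.
by case: (j == _); rewrite ?mulr0 ?mul0r ?addr0.
Qed.

Definition mnm_of (s : seq 'I_n) : 'X_{1..n} := \sum_(k <- s) U_(k).

Lemma prod_mpolyX (s : seq 'I_n) : \prod_(k <- s) 'X_k = 'X_[mnm_of s] :> {mpoly D[n]}.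
Proof.
by elim: s => [|k s IH]; rewrite /mnm_of ?big_nil ?mpolyX0 // !big_cons mpolyXD -/(mnm_of s) IH.
Qed.

Lemma evalW_generic_row0_sum ys zs : let w := map yv ys ++ map zv zs in
  evalW ge w i0 i0 + evalW ge w i0 i1 = 'X_[mnm_of (path_indets false w)].
Proof.
by rewrite /= !evalW_generic_row0 prod_mpolyX; case: (odd _); rewrite ?addr0 ?add0r.
Qed.

Lemma evalP_generic_row0_sum (p : fpoly D) : (forall t, t \in p -> inB t.2) ->
  let A := evalP (@mpolyC n D) ge p in
  A i0 i0 + A i0 i1 = \sum_(t <- p) t.1%:MP * 'X_[mnm_of (path_indets false t.2)].
Proof.
move=> Bp /=; rewrite /evalP !summxE -big_split /=; apply: eq_big_seq => t tp.
have [ys [zs [-> _ _ _]]] := Bp t tp.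
by rewrite !mxE -mulrDr evalW_generic_row0_sum.
Qed.

Lemma mnm_of_coord s k : mnm_of s k = count_mem k s.
Proof.
by elim: s => [|x s IH]; rewrite /mnm_of ?big_nil ?big_cons mnmE // -/(mnm_of s) IH mnm1E.
Qed.

Definition decode (r : nat) (s : seq 'I_n) : seq nat :=
  [seq (val k %/ 3)%N | k <- s & (val k %% 3 == r)%N].

Lemma decode_cons r k s : decode r (k :: s) =
  if (val k %% 3 == r)%N then (val k %/ 3)%N :: decode r s else decode r s.
Proof. by rewrite /decode /=; case: ifP. Qed.

Lemma decode_cat r s t : decode r (s ++ t) = decode r s ++ decode r t.
Proof. by rewrite /decode filter_cat map_cat. Qed.

Lemma perm_decode r s t : perm_eq s t -> perm_eq (decode r s) (decode r t).
Proof. by move=> st; apply/perm_map/perm_filter. Qed.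

Lemma decode_indet r r' cs : (r' < 3)%N -> all (fun c => c < N)%N cs ->
  decode r (map (indet r') cs) = if r == r' then cs else [::].
Proof.
move=> r'3; elim: cs => [|c cs IH] /=; first by case: eqP.
case/andP=> cN /IH; rewrite decode_cons => ->.
have -> : val (indet r' c) = (3 * c + r')%N by rewrite /indet /= inordK //; lia.
have -> : ((3 * c + r') %% 3 = r')%N by lia.
have -> : ((3 * c + r') %/ 3 = c)%N by lia.
by rewrite eq_sym; case: eqP.
Qed.

Lemma path_indets_y b ys w : path_indets b (map yv ys ++ w) = map (indet 0) ys ++ path_indets b w.
Proof. by elim: ys => //= c ys ->. Qed.

Lemma path_indets_z b zs : perm_eq (path_indets b (map zv zs))
  (map (indet (if b then 2 else 1)) (evpos zs) ++ map (indet (if b then 1 else 2)) (odpos zs)).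
Proof.
elim: zs b => [|c zs IH] b; first by case: b.
rewrite evposC odposC /= perm_cons; apply: perm_trans (IH (~~ b)) _.
by case: b; rewrite perm_catC.
Qed.

Definition bounded (w : word) := all (fun x : var => x.2 < N)%N w.

Lemma decode_path_indets ys zs : all (fun c => c < N)%N ys -> all (fun c => c < N)%N zs ->
  let s := path_indets false (map yv ys ++ map zv zs) in
  [/\ perm_eq (decode 0 s) ys, perm_eq (decode 1 s) (evpos zs) & perm_eq (decode 2 s) (odpos zs)].
Proof.
move=> Bys Bzs /=.
have [Be Bo] : all (fun c => c < N)%N (evpos zs) /\ all (fun c => c < N)%N (odpos zs).
  by split; apply/allP => c /mem_mask /(allP Bzs).
have code_perm r : perm_eq (decode r (path_indets false (map yv ys ++ map zv zs)))
  (decode r (map (indet 0) ys ++ map (indet 1) (evpos zs) ++ map (indet 2) (odpos zs))).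
  by apply: perm_decode; rewrite path_indets_y perm_cat2l (path_indets_z false zs).
move: (code_perm 0%N) (code_perm 1%N) (code_perm 2%N).
by rewrite !decode_cat !decode_indet //= ?cats0 => p0 p1 p2; split.
Qed.

Lemma inB_mnm_of_inj w1 w2 : inB w1 -> inB w2 -> bounded w1 -> bounded w2 ->
  mnm_of (path_indets false w1) = mnm_of (path_indets false w2) -> w1 = w2.
Proof.
move=> [ys1 [zs1 [-> sy1 se1 so1]]] [ys2 [zs2 [-> sy2 se2 so2]]].
rewrite /bounded !all_cat !all_map => /andP[By1 Bz1] /andP[By2 Bz2] /mnmP E.
have P : perm_eq (path_indets false (map yv ys1 ++ map zv zs1))
                 (path_indets false (map yv ys2 ++ map zv zs2)).
  by apply/allP => k _ /=; rewrite -!mnm_of_coord E.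
have [y1 e1 o1] := decode_path_indets By1 Bz1; have [y2 e2 o2] := decode_path_indets By2 Bz2.
have part r (a b : seq nat) : sorted leq a -> sorted leq b ->
  perm_eq (decode r (path_indets false (map yv ys1 ++ map zv zs1))) a ->
  perm_eq (decode r (path_indets false (map yv ys2 ++ map zv zs2))) b -> a = b.
  move=> sa sb pa pb; apply: (sorted_eq leq_trans anti_leq sa sb).
  by rewrite -(permPl pa) -(permPr pb); apply: perm_decode.
rewrite (part _ _ _ sy1 sy2 y1 y2); congr (_ ++ map zv _).
rewrite -(interleave_evpos_odpos zs1) -(interleave_evpos_odpos zs2).
by rewrite (part _ _ _ se1 se2 e1 e2) (part _ _ _ so1 so2 o1 o2).
Qed.

End GenericAssignment.

Theorem independence (D : comNzRingType) (p : fpoly D) :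
  uniq (map snd p) -> (forall t, t \in p -> inB t.2) ->
  idealI (coef p) -> forall t, t \in p -> t.1 = 0.
Proof.
move=> up Bp Ip t0 t0p.
pose N := (\max_(t <- p) \max_(x <- t.2) x.2).+1.
have Bnd t : t \in p -> bounded N t.2.
  move=> tp; apply/allP => x xt /=; rewrite ltnS.
  apply: leq_trans (leq_bigmax_seq (F := fun x : var => x.2) _ xt isT) _.
  exact: (leq_bigmax_seq (F := fun t : D * word => \max_(x <- t.2) x.2) _ tp isT).
have := idealI_graded_identity (@mpolyC _ D) Ip (graded_generic_assignment D N).
move=> /(congr1 (fun A : 'M_2 => A ord0 ord0 + A ord0 ord_max)).
rewrite /= !mxE addr0 evalP_generic_row0_sum //.
move=> /(congr1 (mcoeff (mnm_of (path_indets N false t0.2)))).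
rewrite mcoeff0 raddf_sum /=.
under eq_big_seq => t tp.
  rewrite mcoeffCM mcoeffX.
  have -> : (mnm_of (path_indets N false t.2) == mnm_of (path_indets N false t0.2)) = (t.2 == t0.2).
    apply/eqP/eqP => [E|->] //.
    exact: inB_mnm_of_inj (Bp t tp) (Bp t0 t0p) (Bnd t tp) (Bnd t0 t0p) E.
  over.
move=> sum0; rewrite -(fpoly_coef_uniq up t0p) -[RHS]sum0 /coef big_mkcond.
by apply: eq_bigr => t _; case: (_ == _); rewrite ?mulr1 ?mulr0.
Qed.

Theorem mainTheorem4 (D : idomainType) (Dinf : forall s : seq D, exists x : D, x \notin s) :
  (forall f : fpoly D, exists p : fpoly D,
      (forall t, t \in p -> inB t.2) /\ idealI (coef (psub f p))) /\
  (forall p : fpoly D, uniq (map snd p) -> (forall t, t \in p -> inB t.2) ->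
      idealI (coef p) -> forall t, t \in p -> t.1 = 0).
Proof. by split; [apply: spanning | apply: independence]. Qed.
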